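(* Let $d\in\mathbb{N}$, $d\geq 1$. There is no $d$-dimensional freezing cellular automaton $F$ such that, for every $d$-dimensional freezing cellular automaton $G$ with von Neumann neighborhood $\mathrm{VN}_d$, $F$ simulates $G$ with context $C=\{\vec 0\}$ (for some slowdown $T>0$ and some rectangular block $B$).
   Context: A $d$-dimensional cellular automaton (CA) is $F=(d,Q,N,f)$ with $Q$ a finite state set, $N\subset\mathbb{Z}^d$ a finite neighborhood and $f:Q^N\to Q$; its global map on $Q^{\mathbb{Z}^d}$ is $F(c)_z=f(c|_{z+N})$. A CA is $\preceq$-freezing for a partial order $\preceq$ on $Q$ if $F(c)_z\preceq c_z$ for every configuration $c$ and cell $z$; it is freezing if it is $\preceq$-freezing for some partial order. The von Neumann neighborhood is $\mathrm{VN}_d=\{\vec 0,\pm e_1,\dots,\pm e_d\}$ where $e_1,\dots,e_d$ is the canonical basis. Simulation: let $F=(d,Q_F,N,f)$, $G=(d,Q_G,N',g)$, $T>0$, $B\subseteq\mathbb{Z}^d$ a rectangular block with size-vector $b\in\mathbb{Z}^d$, and $C\subset\mathbb{Z}^d$ finite with $\vec0\in C$. $F$ simulates $G$ with slowdown $T$, block $B$ and context $C$ if there is a map $\phi:Q_G^C\to Q_F^B$ such that the map $\bar\phi:Q_G^{\mathbb{Z}^d}\to Q_F^{\mathbb{Z}^d}$ defined by $\bar\phi(c)_{bz+r}=\phi(c|_{z+C})_r$ for $z\in\mathbb{Z}^d$, $r\in B$ (with $bz$ the componentwise product) is injective and satisfies $\bar\phi(G(c))=F^T(\bar\phi(c))$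 for all $c$. The simulation is called context-free when $C=\{\vec 0\}$. *)

From HB Require Import structures.
From mathcomp Require Import all_boot all_order all_algebra.
Set Implicit Arguments. Unset Strict Implicit. Unset Printing Implicit Defensive.
Import Order.TTheory GRing.Theory Num.Theory.

Definition vec (d : nat) := 'I_d -> int.

Definition vzero (d : nat) : vec d := fun _ => 0%R.
Definition vadd (d : nat) (x y : vec d) : vec d := fun i => (x i + y i)%R.
Definition vopp (d : nat) (x : vec d) : vec d := fun i => (- x i)%R.
Definition unitv {d : nat} (j : 'I_d) : vec d := fun i => if i == j then 1%R else 0%R.

Definition VN (d : nat) : seq (vec d) :=
  @vzero d :: flatten [seq [:: unitv j; vopp (unitv j)] | j <- enum 'I_d].

(* A CA (d, Q, N, f): the neighborhood N is a finite list of vectors and the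
   local rule f reads one state per element of N (i.e. f : Q^N -> Q). *)
Definition global (d : nat) (Q : finType) (N : seq (vec d))
  (f : {ffun 'I_(size N) -> Q} -> Q) (c : vec d -> Q) : vec d -> Q :=
  fun z => f [ffun i : 'I_(size N) => c (vadd z (nth (@vzero d) N i))].

Definition freezing (d : nat) (Q : finType) (N : seq (vec d))
  (f : {ffun 'I_(size N) -> Q} -> Q) : Prop :=
  exists le : rel Q,
    [/\ reflexive le, antisymmetric le, transitive le &
        forall (c : vec d -> Q) (z : vec d), le (global f c z) (c z)].

(* The block encoding phibar for a context-free simulation with block
   B = prod_i [0, b_i) and phi : Q_G -> Q_F^B: every cell x writes uniquely
   as x = b z + r with r in B, namely z_i = x_i div b_i, r_i = x_i mod b_i. *)
Definition phibar (d : nat) (QG QF : Type) (b : vec d) (phi : QG -> vec d -> QF)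
  (c : vec d -> QG) : vec d -> QF :=
  fun x => phi (c (fun i => (x i %/ b i)%Z)) (fun i => (x i %% b i)%Z).

(* F simulates G with some slowdown T > 0, some rectangular block B (size
   vector b with positive entries) and context C = {0}. *)
Definition simulates_cf (d : nat) (QF : finType) (NF : seq (vec d))
  (fF : {ffun 'I_(size NF) -> QF} -> QF)
  (QG : finType) (NG : seq (vec d)) (fG : {ffun 'I_(size NG) -> QG} -> QG) : Prop :=
  exists T : nat, (0 < T)%N /\
  exists b : vec d, (forall i, (0 < b i)%R) /\
  exists phi : QG -> vec d -> QF,
    (forall c1 c2 : vec d -> QG,
        (forall x, phibar b phi c1 x = phibar b phi c2 x) -> forall z, c1 z = c2 z)
    /\ (forall (c : vec d -> QG) (x : vec d),
          phibar b phi (global fG c) x = iter T (global fF) (phibar b phi c) x).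

From mathcomp Require Import all_boot all_order all_algebra zify.
From Stdlib Require Import FunctionalExtensionality.
Set Implicit Arguments. Unset Strict Implicit. Unset Printing Implicit Defensive.
Import Order.TTheory GRing.Theory Num.Theory.
Local Open Scope ring_scope.

(* Let R be the radius of the neighbourhood of F and K the number of F-patterns on a box of
   side 2R.  Take for G the bridge rule on K + 4 states: a cell in state 0 turns into 1 when
   two opposite neighbours carry the same colour >= 2, and nothing else ever changes.
   If every side of the simulating block is below 2R, the block encoding injects the K + 4
   states of G into the K patterns.  Otherwise some side b_j is at least 2R.  The
   configuration with 0 at the origin, colours a at -e_j and y at e_j and 1 elsewhere is
   G-fixed when a <> y, so its encoding is F^T-fixed, hence F-fixed since F is freezing.
   No F-neighbourhood meets both the block of -e_j and the block of e_j, so the encoding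
   for a = y agrees around every cell with one of these F-fixed points and is F-fixed as
   well; but G changes that configuration at the origin, against injectivity. *)

Lemma vaddv0 d (x : vec d) : vadd x (@vzero d) = x.
Proof. by apply: functional_extensionality => i; rewrite /vadd addr0. Qed.

Lemma vadd0v d (x : vec d) : vadd (@vzero d) x = x.
Proof. by apply: functional_extensionality => i; rewrite /vadd add0r. Qed.

Lemma size_flatten_pairs (A T : Type) (f g : A -> T) (s : seq A) :
  size (flatten [seq [:: f x; g x] | x <- s]) = (size s).*2.
Proof. by elim: s => //= x s ->. Qed.

Lemma nth_flatten_pairs (A T : Type) (x0 : T) (a0 : A) (f g : A -> T) (s : seq A) k :
  (k < size s)%N ->
  nth x0 (flatten [seq [:: f x; g x] | x <- s]) k.*2 = f (nth a0 s k) /\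
  nth x0 (flatten [seq [:: f x; g x] | x <- s]) k.*2.+1 = g (nth a0 s k).
Proof. by elim: s k => [|x s IH] [|k] //=; rewrite ltnS => /IH. Qed.

Lemma size_VN d : size (VN d) = d.*2.+1.
Proof. by rewrite /VN /= size_flatten_pairs size_enum_ord. Qed.

Lemma nth_VN_unitv d (j : 'I_d) :
  nth (@vzero d) (VN d) j.*2.+1 = unitv j /\
  nth (@vzero d) (VN d) j.*2.+2 = vopp (unitv j).
Proof.
have := @nth_flatten_pairs _ _ (@vzero d) j (@unitv d) (fun k => vopp (unitv k))
  (enum 'I_d) j.
by rewrite size_enum_ord ltn_ord nth_ord_enum => /(_ isT).
Qed.

Definition VN_center d : 'I_(size (VN d)) := @Ordinal (size (VN d)) 0 isT.

Section CellularAutomaton.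
Variables (d : nat) (Q : finType) (N : seq (vec d)) (f : {ffun 'I_(size N) -> Q} -> Q).

Definition fixpoint (c : vec d -> Q) := global f c = c.

Lemma global_local (c c' : vec d -> Q) x :
  (forall i : 'I_(size N),
     c (vadd x (nth (@vzero d) N i)) = c' (vadd x (nth (@vzero d) N i))) ->
  global f c x = global f c' x.
Proof. by move=> eq_cc'; rewrite /global; congr f; apply/ffunP => i; rewrite !ffunE. Qed.

Lemma fixpoint_local (c : vec d -> Q) :
  (forall x, exists2 c', fixpoint c' &
     c' x = c x /\ forall i : 'I_(size N),
       c' (vadd x (nth (@vzero d) N i)) = c (vadd x (nth (@vzero d) N i))) ->
  fixpoint c.
Proof.
move=> loc; apply: functional_extensionality => x.
have [c' fix_c' [<- eq_nbh]] := loc x.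
by rewrite -(global_local eq_nbh) fix_c'.
Qed.

Lemma freezing_fixpoint T (c : vec d -> Q) :
  freezing f -> (0 < T)%N -> iter T (global f) c = c -> fixpoint c.
Proof.
move=> [le [le_refl le_anti le_trans le_global]] T_gt0 fixT.
apply: functional_extensionality => x; apply: le_anti; rewrite le_global /=.
have le_iter n : le (iter n.+1 (global f) c x) (global f c x).
  by elim: n => [|n IH] //=; apply: le_trans IH; apply: le_global.
by case: T T_gt0 fixT => // n _ fixT; have := le_iter n; rewrite fixT.
Qed.

Lemma freezing_one_transition (i0 : 'I_(size N)) (p q : Q) :
  nth (@vzero d) N i0 = @vzero d -> p != q ->
  (forall w, f w = w i0 \/ (w i0 = p /\ f w = q)) -> freezing f.
Proof.
move=> N_i0 pq f_trans.
exists (fun a b => (a == b) || ((a == q) && (b == p))); split.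
- by move=> a; rewrite eqxx.
- move=> a b /andP [/orP [/eqP //|/andP [/eqP -> /eqP ->]]].
  by rewrite (negbTE pq).
- move=> b a c /orP [/eqP -> //|/andP [/eqP aq /eqP bp]].
  case/orP => [/eqP <-|/andP [/eqP bq _]]; first by rewrite aq bp !eqxx orbT.
  by move: pq; rewrite -bp bq eqxx.
- move=> c z; rewrite /global.
  have [->|[]] := f_trans [ffun i : 'I_(size N) => c (vadd z (nth (@vzero d) N i))].
    by rewrite ffunE N_i0 vaddv0 eqxx.
  by rewrite ffunE N_i0 vaddv0 => -> ->; rewrite !eqxx orbT.
Qed.

End CellularAutomaton.

Definition radius d (N : seq (vec d)) : nat :=
  (\max_(i < size N) \max_(k < d) `|nth (@vzero d) N i k|)%N.

Lemma radius_ge d (N : seq (vec d)) (i : 'I_(size N)) k :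
  (`|nth (@vzero d) N i k| <= radius N)%N.
Proof.
apply: leq_trans (leq_bigmax i).
exact: (leq_bigmax (F := fun k => `|nth (@vzero d) N i k|%N) k).
Qed.

Lemma divz_window (B t : int) (R : nat) : 0 < B -> (R.*2)%:Z <= B ->
  (forall e : int, (`|e| <= R)%N -> ((t + e) %/ B)%Z != 1) \/
  (forall e : int, (`|e| <= R)%N -> ((t + e) %/ B)%Z != -1).
Proof.
move=> B_gt0 RB; have [tR_lt|tR_ge] := ltP (t + R%:Z) B.
- by left => e eR; apply/eqP; lia.
- by right => e eR; apply/eqP; lia.
Qed.

Definition opposite d (v w : vec d) : bool := [forall k, w k == - v k].

Section BridgeRule.
Variables d m : nat.
Implicit Type w : {ffun 'I_(size (VN d)) -> 'I_m.+4}.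

Definition bridges w : bool :=
  (w (VN_center d) == ord0) &&
  [exists i : 'I_(size (VN d)), exists i' : 'I_(size (VN d)),
     opposite (nth (@vzero d) (VN d) i) (nth (@vzero d) (VN d) i')
     && (w i == w i') && (1 < w i)%N].

Definition bridge_rule w : 'I_m.+4 := if bridges w then inord 1 else w (VN_center d).

Lemma bridge_rule_freezing : freezing bridge_rule.
Proof.
apply: (freezing_one_transition (i0 := VN_center d) (p := ord0) (q := inord 1)) => //.
  by rewrite -val_eqE /= inordK.
move=> w; rewrite /bridge_rule; case: ifP => [/andP [/eqP -> _]|_]; by [right | left].
Qed.

End BridgeRule.

Definition on_axis d (j : 'I_d) (x : vec d) : bool := [forall k, (k != j) ==> (x k == 0)].

Definition axis_cfg d m (j : 'I_d) (a y : 'I_m.+4) (x : vec d) : 'I_m.+4 :=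
  if on_axis j x then
    if x j == 0 then ord0 else if x j == -1 then a else if x j == 1 then y else inord 1
  else inord 1.

Section AxisConfiguration.
Variables (d m : nat) (j : 'I_d).
Implicit Types (a y : 'I_m.+4) (x : vec d).

Lemma axis_cfg_agreeL a a' y x : x j != -1 -> axis_cfg j a y x = axis_cfg j a' y x.
Proof. by move=> xj; rewrite /axis_cfg (negbTE xj). Qed.

Lemma axis_cfg_agreeR a y y' x : x j != 1 -> axis_cfg j a y x = axis_cfg j a y' x.
Proof. by move=> xj; rewrite /axis_cfg (negbTE xj). Qed.

Lemma axis_cfg_vopp a y x : axis_cfg j a y (vopp x) = axis_cfg j y a x.
Proof.
rewrite /axis_cfg /on_axis /vopp.
rewrite (eq_forallb (P2 := fun k => (k != j) ==> (x k == 0))); last first.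
  by move=> k; rewrite oppr_eq0.
case: ifP => // _; rewrite oppr_eq0.
case: (x j =P 0) => // _; rewrite !eqr_oppLR opprK.
by case: (x j =P 1) => [->|].
Qed.

Lemma axis_cfg_vzero a y : axis_cfg j a y (@vzero d) = ord0.
Proof.
by rewrite /axis_cfg /on_axis /vzero eqxx; case: forallP => // -[k]; rewrite implybT.
Qed.

Lemma axis_cfg_unitv a y : axis_cfg j a y (unitv j) = y.
Proof.
rewrite /axis_cfg /on_axis /unitv eqxx.
by case: forallP => // -[k]; case: (k =P j).
Qed.

Lemma axis_cfg_eq0 a y x :
  (1 < a)%N -> (1 < y)%N -> axis_cfg j a y x = ord0 -> x = @vzero d.
Proof.
move=> a_gt1 y_gt1; rewrite /axis_cfg.
case: ifP => [/forallP x_axis|_]; last by move/(congr1 val); rewrite /= inordK.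
case: ifP => [/eqP xj _|_].
  apply: functional_extensionality => k; case: (k =P j) => [->//|/eqP kj].
  by have /implyP/(_ kj)/eqP := x_axis k.
case: ifP => _; first by move=> a0; rewrite a0 in a_gt1.
case: ifP => _; first by move=> y0; rewrite y0 in y_gt1.
by move/(congr1 val); rewrite /= inordK.
Qed.

Lemma axis_cfg_symmetric a y x :
  (1 < axis_cfg j a y x)%N -> axis_cfg j a y x = axis_cfg j y a x -> a = y.
Proof.
rewrite /axis_cfg; case: ifP => _; last by rewrite /= inordK.
case: ifP => _; first by [].
by case: ifP => _ //; case: ifP => _ //; rewrite /= inordK.
Qed.

Lemma axis_cfg_fixpoint a y : a != y -> (1 < a)%N -> (1 < y)%N ->
  fixpoint (@bridge_rule d m) (axis_cfg j a y).
Proof.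
move=> ay a_gt1 y_gt1; apply: functional_extensionality => z.
rewrite /global /bridge_rule /bridges ffunE /= vaddv0.
case: ifP => // /andP [/eqP /(axis_cfg_eq0 a_gt1 y_gt1) z0].
case/existsP => i /existsP [i' /andP [/andP [opp_ii' /eqP]]].
rewrite !ffunE z0 !vadd0v.
have -> : nth (@vzero d) (VN d) i' = vopp (nth (@vzero d) (VN d) i).
  by apply: functional_extensionality => k; apply/eqP; move/forallP: opp_ii'.
rewrite axis_cfg_vopp => sym /axis_cfg_symmetric /(_ sym) a_y.
by rewrite a_y eqxx in ay.
Qed.

Lemma axis_cfg_bridged a : (1 < a)%N ->
  global (@bridge_rule d m) (axis_cfg j a a) (@vzero d) = inord 1.
Proof.
move=> a_gt1; rewrite /global /bridge_rule /bridges ffunE /= vaddv0 axis_cfg_vzero eqxx /=.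
have [VN_e VN_oppe] := nth_VN_unitv j.
have lt_e : (j.*2.+1 < size (VN d))%N by rewrite size_VN; have := ltn_ord j; lia.
have lt_oppe : (j.*2.+2 < size (VN d))%N by rewrite size_VN; have := ltn_ord j; lia.
case: existsP => // -[]; exists (Ordinal lt_e); apply/existsP; exists (Ordinal lt_oppe).
rewrite !ffunE -[nat_of_ord (Ordinal lt_e)]/(j.*2.+1).
rewrite -[nat_of_ord (Ordinal lt_oppe)]/(j.*2.+2).
rewrite VN_e VN_oppe !vadd0v axis_cfg_vopp axis_cfg_unitv eqxx a_gt1 !andbT.
by apply/forallP => k.
Qed.

End AxisConfiguration.

Definition phibar_injective d (QG QF : Type) (b : vec d) (phi : QG -> vec d -> QF) :=
  forall c1 c2 : vec d -> QG,
    (forall x, phibar b phi c1 x = phibar b phi c2 x) -> forall z, c1 z = c2 z.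

Lemma card_le_block_patterns d (QG QF : finType) (b : vec d) (phi : QG -> vec d -> QF) n :
  (forall i, 0 < b i <= n%:Z) -> phibar_injective b phi ->
  (#|QG| <= #|{ffun {ffun 'I_d -> 'I_n} -> QF}|)%N.
Proof.
move=> b_range phibar_inj.
pose pattern q : {ffun {ffun 'I_d -> 'I_n} -> QF} :=
  [ffun r : {ffun 'I_d -> 'I_n} => phi q (fun i => (r i)%:Z)].
suff pattern_inj : injective pattern by apply: leq_card pattern_inj.
move=> q1 q2 eq_pat; apply: (phibar_inj (fun=> q1) (fun=> q2) _ (@vzero d)) => x.
have mod_range i : 0 <= (x i %% b i)%Z < n%:Z.
  have /andP [b_gt0 b_le] := b_range i.
  by rewrite modz_ge0 ?lt0r_neq0 //=; apply: lt_le_trans (ltz_pmod _ b_gt0) b_le.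
have mod_lt i : (`|(x i %% b i)%Z| < n)%N by have := mod_range i; lia.
pose r : {ffun 'I_d -> 'I_n} := [ffun i => Ordinal (mod_lt i)].
rewrite /phibar; have -> : (fun i => (x i %% b i)%Z) = (fun i => (r i)%:Z).
  by apply: functional_extensionality => i; rewrite ffunE /=; have := mod_range i; lia.
by move/ffunP: eq_pat => /(_ r); rewrite !ffunE.
Qed.

Section LargeBlock.
Variables (d m : nat) (QF : finType) (NF : seq (vec d)).
Variable fF : {ffun 'I_(size NF) -> QF} -> QF.
Hypothesis fF_freezing : freezing fF.
Variables (T : nat) (b : vec d) (phi : 'I_m.+4 -> vec d -> QF) (j : 'I_d).
Hypotheses (T_gt0 : (0 < T)%N) (b_gt0 : forall i, 0 < b i).
Hypothesis large_block : (radius NF).*2%:Z <= b j.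
Hypothesis phibar_comm : forall c x,
  phibar b phi (global (@bridge_rule d m) c) x = iter T (global fF) (phibar b phi c) x.

Lemma phibar_fixpoint c : fixpoint (@bridge_rule d m) c -> fixpoint fF (phibar b phi c).
Proof.
move=> fix_c; apply: (freezing_fixpoint fF_freezing T_gt0).
by apply: functional_extensionality => x; rewrite -phibar_comm fix_c.
Qed.

Lemma phibar_axis_cfg_fixpoint (a a' : 'I_m.+4) :
  a != a' -> (1 < a)%N -> (1 < a')%N -> fixpoint fF (phibar b phi (axis_cfg j a a)).
Proof.
move=> aa' a_gt1 a'_gt1; apply: fixpoint_local => x.
have [no_right | no_left] := divz_window (x j) (b_gt0 j) large_block.
- exists (phibar b phi (axis_cfg j a a')).
    exact/phibar_fixpoint/axis_cfg_fixpoint.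
  split => [|i]; rewrite /phibar (@axis_cfg_agreeR _ _ j a a' a) //=.
    by have := no_right 0 isT; rewrite addr0.
  by rewrite /vadd; apply: no_right (radius_ge i j).
- exists (phibar b phi (axis_cfg j a' a)).
    by apply/phibar_fixpoint/axis_cfg_fixpoint; rewrite // eq_sym.
  split => [|i]; rewrite /phibar (@axis_cfg_agreeL _ _ j a' a a) //=.
    by have := no_left 0 isT; rewrite addr0.
  by rewrite /vadd; apply: no_left (radius_ge i j).
Qed.

Lemma large_block_not_injective : ~ phibar_injective b phi.
Proof.
move=> phibar_inj.
pose s2 : 'I_m.+4 := inord 2; pose s3 : 'I_m.+4 := inord 3.
have s2_gt1 : (1 < s2)%N by rewrite inordK.
have s3_gt1 : (1 < s3)%N by rewrite inordK.
have s23 : s2 != s3 by rewrite -val_eqE /= !inordK.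
have fixF := phibar_axis_cfg_fixpoint s23 s2_gt1 s3_gt1.
suff /(_ (@vzero d)) :
    forall z, global (@bridge_rule d m) (axis_cfg j s2 s2) z = axis_cfg j s2 s2 z.
  by rewrite axis_cfg_bridged // axis_cfg_vzero => /(congr1 val); rewrite /= inordK.
by apply: phibar_inj => x; rewrite phibar_comm (iter_fix _ fixF).
Qed.

End LargeBlock.

Theorem theorem4 (d : nat) : (1 <= d)%N ->
  ~ exists (QF : finType) (NF : seq (vec d)) (fF : {ffun 'I_(size NF) -> QF} -> QF),
      freezing fF /\
      forall (QG : finType) (fG : {ffun 'I_(size (VN d)) -> QG} -> QG),
        freezing fG -> simulates_cf fF fG.
Proof.
move=> _ [QF [NF [fF [fF_freezing simulates_all]]]].
pose R := radius NF; pose K := #|{ffun {ffun 'I_d -> 'I_(R.*2)} -> QF}|.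
have [T [T_gt0 [b [b_gt0 [phi [phibar_inj phibar_comm]]]]]] :=
  simulates_all _ _ (bridge_rule_freezing d K).
have [/existsP [j large] | /existsPn small] := boolP [exists j, R.*2%:Z <= b j].
  exact: (large_block_not_injective fF_freezing T_gt0 b_gt0 large phibar_comm
                                    phibar_inj).
have b_range i : 0 < b i <= R.*2%:Z by rewrite b_gt0 ltW // ltNge small.
by have := card_le_block_patterns b_range phibar_inj; rewrite card_ord; lia.
Qed.
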